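(* For every integer $n\geq 2$, $$\sum_{k=1}^{n}B_{2k}B_{2n-2k}=\frac{1}{n+1}\sum_{k=1}^{n}B_{2k}B_{2n-2k}\binom{2n+2}{2k+2}+2nB_{2n}.$$
   Context: $B_n$ denotes the Bernoulli numbers, defined by $\frac{x}{e^x-1}=\sum_{n\ge 0}B_n\frac{x^n}{n!}$ (so $B_0=1$). *)

From mathcomp Require Import all_boot all_order all_algebra.
Set Implicit Arguments. Unset Strict Implicit. Unset Printing Implicit Defensive.
Import GRing.Theory Num.Theory.
Local Open Scope ring_scope.

(* Bernoulli numbers (rational), convention x/(e^x-1) = sum B_n x^n/n!,
   so B_0 = 1, B_1 = -1/2.  Equivalently (comparing coefficients of
   x = (e^x - 1) * sum B_n x^n/n!):  B_0 = 1 and for m >= 1,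
   sum_{k=0}^{m} C(m+1,k) B_k = 0, i.e.
   B_m = - 1/(m+1) * sum_{k<m} C(m+1,k) B_k. *)

Fixpoint bern_list (m : nat) : seq rat :=
  match m with
  | O => [:: 1]
  | m'.+1 =>
      let s := bern_list m' in
      rcons s (- (m'.+2%:R)^-1 *
               \sum_(k < m'.+1) ('C(m'.+2, k))%:R * nth 0 s k)
  end.

Definition bernoulli (n : nat) : rat := nth 0 (bern_list n) n.

From HB Require Import structures.
From mathcomp Require Import all_boot all_order all_algebra ring zify.
Set Implicit Arguments. Unset Strict Implicit. Unset Printing Implicit Defensive.
Import GRing.Theory Num.Theory.
Local Open Scope ring_scope.

(* With F(x) = x / (e^x - 1), the identity
     e^((s+r)x) - 1 = (e^(sx) - 1) + (e^(rx) - 1) + (e^(sx) - 1) (e^(rx) - 1)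
   yields  (s + r) F(sx) F(rx) = F((s+r)x) (s F(rx) + r F(sx) + s r x).
   For s = 1, r = -1 it says that F(x) + x/2 is even.  For s = t, r = 1 - t,
   comparing coefficients of x^n and integrating over t in [0, 1] with the
   beta integral gives, for even n >= 4,
     (n + 2) \sum_k B_k B_(n-k) = 2 \sum_k C(n+2, k+2) B_k B_(n-k).
   Only even indices contribute, and separating the terms with k = 0 on both
   sides leaves the theorem. *)

Lemma size_bern_list m : size (bern_list m) = m.+1.
Proof. by elim: m => //= m IH; rewrite size_rcons IH. Qed.

Lemma nth_bern_list m k : (k <= m)%N -> nth 0 (bern_list m) k = bernoulli k.
Proof.
elim: m k => [|m IH] k; first by rewrite leqn0 => /eqP ->.
rewrite leq_eqVlt => /orP[/eqP -> //|ltkm].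
by rewrite /= nth_rcons size_bern_list ltkm IH.
Qed.

Lemma bernoulli0 : bernoulli 0 = 1.
Proof. by []. Qed.

Lemma sum_bin_bernoulli m : (0 < m)%N ->
  \sum_(k < m.+1) 'C(m.+1, k)%:R * bernoulli k = 0.
Proof.
case: m => // m _; rewrite big_ord_recr /= binSn.
have -> : bernoulli m.+1 =
    - m.+2%:R^-1 * \sum_(k < m.+1) 'C(m.+2, k)%:R * bernoulli k.
  rewrite /bernoulli /= nth_rcons size_bern_list ltnn eqxx; congr (_ * _).
  by apply: eq_bigr => k _; rewrite nth_bern_list // -ltnS.
by rewrite mulrA mulrN mulfV ?pnatr_eq0 // mulN1r subrr.
Qed.

Lemma fact_neq0 {R : numDomainType} k : (k`!%:R : R) != 0.
Proof. by rewrite pnatr_eq0 -lt0n fact_gt0. Qed.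

Lemma invf_fact_mul (R : numFieldType) m j : (j <= m)%N ->
  (j`!%:R^-1 * (m - j)`!%:R^-1 : R) = 'C(m, j)%:R / m`!%:R.
Proof.
move=> le_jm; rewrite -(bin_fact le_jm) !natrM.
have nzC : ('C(m, j)%:R : R) != 0 by rewrite pnatr_eq0 -lt0n bin_gt0.
by field; rewrite !fact_neq0 nzC.
Qed.

Lemma sum_bin_conv_shift (R : comNzRingType) (F : nat -> R) N :
  \sum_(k < N.+1) 'C(N.+2, k)%:R * (F k * F (N - k)%N) =
  \sum_(k < N.+1) 'C(N.+2, k.+2)%:R * (F k * F (N - k)%N).
Proof.
rewrite (reindex_inj rev_ord_inj); apply: eq_bigr => k _ /=.
have le_kN : (k <= N)%N by rewrite -ltnS.
rewrite subSS subKn // -bin_sub; last by lia.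
by rewrite (_ : N.+2 - (N - k) = k.+2)%N; [ring | lia].
Qed.

Lemma big_nat_even (V : nmodType) (F : nat -> V) m :
  (forall j, (j < 2 * m)%N -> odd j -> F j = 0) ->
  \sum_(0 <= j < (2 * m).+1) F j = \sum_(0 <= k < m.+1) F (2 * k)%N.
Proof.
elim: m => [|m IH] F_odd; first by rewrite !big_nat1.
have -> : (2 * m.+1).+1 = (2 * m).+3 by rewrite mulnS.
rewrite (big_nat_recr (2 * m).+2) // (big_nat_recr (2 * m).+1) //=.
rewrite [RHS]big_nat_recr //= IH => [|j lt_j2m]; last by apply: F_odd; lia.
rewrite (F_odd (2 * m).+1) ?addr0 /=; last 2 first.
- lia.
- by rewrite oddM.
by rewrite mulnS addnC addn2.
Qed.

Lemma bin2_double n : 'C((2 * n).+2, 2) = (n.+1 * (2 * n).+1)%N.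
Proof. by rewrite bin2 -[RHS]doubleK; congr half; rewrite /= -mul2n; lia. Qed.

Section TakePoly.
Variable R : comNzRingType.
Implicit Types p q u : {poly R}.

Lemma take_polyMr m p q : take_poly m (p * take_poly m q) = take_poly m (p * q).
Proof.
apply/polyP => i; rewrite !coef_take_poly; case: ifP => // lt_im.
rewrite !coefM; apply: eq_bigr => j _.
by rewrite coef_take_poly (leq_ltn_trans (leq_subr _ _) lt_im).
Qed.

Lemma take_polyMl m p q : take_poly m (take_poly m p * q) = take_poly m (p * q).
Proof. by rewrite mulrC take_polyMr mulrC. Qed.

Lemma take_polyM1 m p u :
  take_poly m u = take_poly m 1 -> take_poly m (p * u) = take_poly m p.
Proof. by move=> u1; rewrite -take_polyMr u1 take_polyMr mulr1. Qed.

End TakePoly.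

(* Series in the variable 'X over Q[t]: [bern_series N s] is F(s x) and
   [expm1_series N s] is (e^(s x) - 1) / (s x), both truncated below degree N. *)
Definition bern_series N (s : {poly rat}) : {poly {poly rat}} :=
  \poly_(k < N) ((bernoulli k / k`!%:R) *: s ^+ k).

Definition expm1_series N (s : {poly rat}) : {poly {poly rat}} :=
  \poly_(k < N) (k.+1`!%:R^-1 *: s ^+ k).

Lemma bern_seriesM_expm1 N s :
  take_poly N (bern_series N s * expm1_series N s) = take_poly N 1.
Proof.
apply/polyP => i; rewrite !coef_take_poly; case: ifP => // lt_iN.
rewrite coefM coef1.
transitivity (\sum_(j < i.+1)
   (((i.+1 - j)`!%:R^-1 * (bernoulli j / j`!%:R)) *: s ^+ i)).
  apply: eq_bigr => j _; rewrite !coef_poly.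
  have le_ji : (j <= i)%N by rewrite -ltnS.
  rewrite (leq_ltn_trans le_ji lt_iN) (leq_ltn_trans (leq_subr _ _) lt_iN).
  by rewrite -scalerAl -scalerAr scalerA -exprD subnKC // subSn // mulrC.
rewrite -scaler_suml; case: i lt_iN => [|i] _.
  by rewrite big_ord1 bernoulli0 expr0 [(1 - 0)`!]/= invr1 !mul1r scale1r.
suff -> : \sum_(j < i.+2) ((i.+2 - j)`!%:R^-1 * (bernoulli j / j`!%:R)) = 0.
  by rewrite scale0r.
transitivity
  (i.+2`!%:R^-1 * \sum_(j < i.+2) 'C(i.+2, j)%:R * bernoulli j); last first.
  by rewrite sum_bin_bernoulli ?mulr0.
rewrite mulr_sumr; apply: eq_bigr => j _.
transitivity (bernoulli j * (j`!%:R^-1 * (i.+2 - j)`!%:R^-1)); first by ring.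
by rewrite invf_fact_mul 1?ltnW //; ring.
Qed.

Lemma exprD_div_fact (s r : {poly rat}) i :
  i.+2`!%:R^-1 *: (s + r) ^+ i.+2 =
  i.+2`!%:R^-1 *: s ^+ i.+2 + i.+2`!%:R^-1 *: r ^+ i.+2 +
  s * r * \sum_(j < i.+1)
            ((j.+1`!%:R^-1 *: s ^+ j) * ((i - j).+1`!%:R^-1 *: r ^+ (i - j))).
Proof.
rewrite addrC exprDn big_ord_recr big_ord_recl /=.
rewrite !subnn !subn0 !expr0 mulr1 mul1r bin0 binn !mulr1n !scalerDr.
rewrite addrAC [X in X + _ = _]addrC; congr (_ + _).
rewrite scaler_sumr mulr_sumr; apply: eq_bigr => j _.
have le_ji : (j <= i)%N by rewrite -ltnS.
rewrite -scalerMnr scalerMnl -scalerAl -!scalerAr scalerA -mulr_natr.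
rewrite /bump /= add1n subSS -(subSn le_ji); congr (_ *: _).
  by rewrite -[(i.+1 - j)%N]subSS invf_fact_mul 1?ltnW // mulrC.
by rewrite subSn // !exprS; ring.
Qed.

Lemma expm1_seriesD N s r :
  take_poly N ((s + r)%:P * expm1_series N (s + r)) =
  take_poly N (s%:P * expm1_series N s + r%:P * expm1_series N r +
               (s * r)%:P * ('X * (expm1_series N s * expm1_series N r))).
Proof.
apply/polyP => i; rewrite !coef_take_poly; case: ifP => // lt_iN.
rewrite !coefD !coefCM coefXM !coef_poly lt_iN -!scalerAr -!exprS.
case: i lt_iN => [|i] lt_iN; first by rewrite [1`!]/= !invr1 !scale1r mulr0 addr0.
rewrite exprD_div_fact coefM; congr (_ + _ * _).
apply: eq_bigr => j _.
have le_ji : (j <= i)%N by rewrite -ltnS.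
rewrite !coef_poly (leq_ltn_trans le_ji (ltnW lt_iN)).
by rewrite (leq_ltn_trans (leq_subr _ _) (ltnW lt_iN)).
Qed.

Lemma bern_seriesD N s r :
  take_poly N ((s + r)%:P * (bern_series N s * bern_series N r)) =
  take_poly N (bern_series N (s + r) *
    (s%:P * bern_series N r + r%:P * bern_series N s + (s * r)%:P * 'X)).
Proof.
set F := bern_series N; set E := expm1_series N.
have cancelEF t p : take_poly N (p * (E t * F t)) = take_poly N p.
  by apply: take_polyM1; rewrite mulrC bern_seriesM_expm1.
set W := F s * F r * F (s + r).
rewrite -[LHS](cancelEF (s + r)).
have -> : (s + r)%:P * (F s * F r) * (E (s + r) * F (s + r)) =
          (s + r)%:P * E (s + r) * W by rewrite /W; ring.
rewrite -[LHS]take_polyMl expm1_seriesD take_polyMl.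
set A := s%:P * F r * F (s + r); set B := r%:P * F s * F (s + r).
set C := (s * r)%:P * 'X * F (s + r).
have -> : (s%:P * E s + r%:P * E r + (s * r)%:P * ('X * (E s * E r))) * W =
          A * (E s * F s) + B * (E r * F r) + C * (E s * F s) * (E r * F r).
  by rewrite /A /B /C /W; ring.
rewrite !take_polyD !cancelEF -!take_polyD /A /B /C.
by congr take_poly; ring.
Qed.

Lemma bern_series0 N : (0 < N)%N -> bern_series N 0 = 1.
Proof.
move=> N_gt0; apply/polyP => k; rewrite coef_poly coef1 expr0n.
case: k => [|k]; first by rewrite N_gt0 bernoulli0 div1r invr1 scale1r.
by rewrite scaler0; case: ifP.
Qed.

Lemma bernoulli_odd k : (1 < k)%N -> odd k -> bernoulli k = 0.
Proof.
move=> k_gt1 odd_k.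
have := bern_seriesD k.+1 1 (-1).
rewrite subrr bern_series0 // polyC0 mul0r mul1r take_poly0r.
move=> /(congr1 (fun p : {poly {poly rat}} => p`_k)).
rewrite coef0 coef_take_poly ltnSn !coefD !coefCM coefX (gtn_eqF k_gt1).
rewrite !coef_poly ltnSn expr1n -signr_odd odd_k expr1 mulr0 addr0.
set c := bernoulli k / k`!%:R => /eqP.
rewrite mul1r mulN1r scalerN -opprD eq_sym oppr_eq0 alg_polyC -polyCD polyC_eq0.
rewrite -mulr2n mulrn_eq0 /= mulf_eq0 invr_eq0 (negbTE (fact_neq0 k)) orbF.
exact/eqP.
Qed.

Definition integral01 (p : {poly rat}) : rat :=
  \sum_(i < size p) p`_i / i.+1%:R.

Lemma integral01_widen (p : {poly rat}) M : (size p <= M)%N ->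
  integral01 p = \sum_(i < M) p`_i / i.+1%:R.
Proof.
move=> le_pM; rewrite /integral01.
rewrite (big_ord_widen _ (fun i => p`_i / i.+1%:R) le_pM).
rewrite big_mkcond; apply: eq_bigr => i _; case: ltnP => // le_pi.
by rewrite nth_default // mul0r.
Qed.

Lemma integral01_is_linear : scalar integral01.
Proof.
move=> a p q; set M := maxn (size p) (size q).
have le_pM : (size p <= M)%N := leq_maxl _ _.
have le_apqM : (size (a *: p + q)%R <= M)%N.
  rewrite (leq_trans (size_add _ _)) // geq_max leq_maxr andbT.
  exact: leq_trans (size_scale_leq _ _) le_pM.
rewrite (integral01_widen le_apqM) (integral01_widen le_pM).
rewrite (integral01_widen (leq_maxr _ _ : (size q <= M)%N)).
rewrite mulr_sumr -big_split; apply: eq_bigr => i _.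
by rewrite coefD coefZ mulrDl mulrA.
Qed.

HB.instance Definition _ :=
  GRing.isLinear.Build rat {poly rat} rat *%R integral01 integral01_is_linear.

Lemma integral01_Xn a : integral01 ('X ^+ a) = a.+1%:R^-1.
Proof.
rewrite /integral01 size_polyXn big_ord_recr /= big1 ?add0r.
  by rewrite coefXn eqxx div1r.
by move=> i _; rewrite coefXn (ltn_eqF (ltn_ord i)) mul0r.
Qed.

Lemma integral01_beta a b :
  integral01 ('X ^+ a * (1 - 'X) ^+ b) = (a`! * b`!)%:R / (a + b).+1`!%:R.
Proof.
elim: b a => [|b IH] a.
  rewrite expr0 mulr1 integral01_Xn addn0 fact0 muln1 factS natrM.
  by field; rewrite fact_neq0 -mulrS pnatr_eq0.
rewrite exprS mulrBl mul1r mulrBr mulrA -exprSr raddfB /= !IH.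
rewrite addSn addnS !factS !natrM.
have nz1 : 1 + (a%:R + b%:R) != 0 :> rat by rewrite -natrD -mulrS pnatr_eq0.
have nz2 : 2 + (a%:R + b%:R) != 0 :> rat by rewrite -!natrD pnatr_eq0.
by field; rewrite fact_neq0 nz1 nz2.
Qed.

Lemma bernoulli_convolution_fact n : (2 < n)%N -> ~~ odd n ->
  \sum_(k < n.+1) bernoulli k * bernoulli (n - k) / n.+1`!%:R =
  \sum_(k < n.+1) bernoulli k / k`!%:R *
                  (2 * bernoulli (n - k) / (n - k).+2`!%:R).
Proof.
move=> n_gt2 even_n.
have := bern_seriesD n.+1 'X (1 - 'X).
rewrite addrC subrK mul1r.
move=> /(congr1 (fun p : {poly {poly rat}} => integral01 p`_n)).
rewrite !coef_take_poly ltnSn !coefM !raddf_sum /=.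
have lt_nk (k : 'I_n.+1) : (n - k < n.+1)%N by rewrite ltnS leq_subr.
set F := bern_series n.+1 => conv.
transitivity (\sum_(k < n.+1) integral01 ((F 'X)`_k * (F (1 - 'X))`_(n - k))).
  apply: eq_bigr => k _; rewrite !coef_poly ltn_ord lt_nk.
  rewrite -scalerAl -scalerAr scalerA linearZ /= integral01_beta.
  rewrite subnKC; last by rewrite -ltnS.
  by rewrite natrM; field; rewrite !fact_neq0.
rewrite conv; apply: eq_bigr => k _.
rewrite !coefD !coefCM coefX !coef_poly ltn_ord lt_nk expr1n.
(* For n - k = 1 the [s r x] summand contributes as well; B_(n-1) = 0 kills it. *)
have [nk1|nk1] := eqVneq (n - k)%N 1%N.
  have -> : bernoulli k = 0.
    have kE : k = (n - 1)%N :> nat by lia.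
    by apply: bernoulli_odd; rewrite kE ?oddB ?even_n //; lia.
  by rewrite !mul0r scale0r mul0r raddf0.
rewrite mulr0 addr0 -scalerAl mul1r linearZ /=; congr (_ * _).
set m := (n - k)%N.
have Xm1 : 'X * (1 - 'X) ^+ m = 'X ^+ 1 * (1 - 'X) ^+ m :> {poly rat}.
  by rewrite expr1.
have Xm2 : (1 - 'X) * 'X ^+ m = 'X ^+ m * (1 - 'X) ^+ 1 :> {poly rat}.
  by rewrite mulrC expr1.
rewrite -!scalerAr linearD !linearZ /= Xm1 Xm2 !integral01_beta.
rewrite add1n addn1 muln1 mul1n !factS !natrM.
by field; rewrite fact_neq0 -mulrS -natrD !pnatr_eq0.
Qed.

Lemma bernoulli_convolution m : (2 <= m)%N ->
  m.+1%:R * \sum_(0 <= k < (2 * m).+1) bernoulli k * bernoulli (2 * m - k) =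
  \sum_(0 <= k < (2 * m).+1)
     'C((2 * m).+2, k.+2)%:R * (bernoulli k * bernoulli (2 * m - k)).
Proof.
move=> m_ge2; rewrite !big_mkord; set N := (2 * m)%N.
have N_gt2 : (2 < N)%N by lia.
have even_N : ~~ odd N by rewrite oddM.
have N2E : N.+2 = (2 * m.+1)%N by rewrite /N; lia.
clearbody N.
have termE (k : 'I_N.+1) :
    bernoulli k / k`!%:R * (2 * bernoulli (N - k)%N / (N - k).+2`!%:R) =
    2 / N.+2`!%:R * ('C(N.+2, k)%:R * (bernoulli k * bernoulli (N - k)%N)).
  have le_kN : (k <= N)%N by rewrite -ltnS.
  transitivity (2 * (bernoulli k * bernoulli (N - k)%N) *
                (k`!%:R^-1 * (N.+2 - k)%N`!%:R^-1)).
    by rewrite (_ : N.+2 - k = (N - k).+2)%N; [ring | lia].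
  rewrite invf_fact_mul; last by lia.
  (* hide the casts, which [ring] would otherwise try to normalize *)
  set F := (N.+2)`!%:R; set C := 'C(_, _)%:R; ring.
have := bernoulli_convolution_fact N_gt2 even_N.
rewrite (eq_bigr _ (fun k _ => termE k)) -mulr_sumr -mulr_suml.
move/(canRL (divfK (fact_neq0 N.+1))) => ->.
rewrite -sum_bin_conv_shift factS natrM N2E natrM.
set T := \sum_(k < N.+1) _.
by field; rewrite fact_neq0 -mulrS pnatr_eq0.
Qed.

Lemma bernoulli_mul_odd n j : (2 <= n)%N -> (j < 2 * n)%N -> odd j ->
  bernoulli j * bernoulli (2 * n - j) = 0.
Proof.
move=> n_ge2 lt_j2n odd_j; have [->|j_neq1] := eqVneq j 1%N.
  rewrite (@bernoulli_odd (2 * n - 1)) ?mulr0 //; first by lia.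
  by rewrite oddB ?oddM //; lia.
by rewrite bernoulli_odd ?mul0r //; case: j j_neq1 odd_j {lt_j2n} => [|[]].
Qed.

Theorem mainTheorem6 (n : nat) (hn : (2 <= n)%N) :
  \sum_(1 <= k < n.+1) bernoulli (2 * k) * bernoulli (2 * n - 2 * k)
  = (n.+1%:R)^-1 *
      \sum_(1 <= k < n.+1) bernoulli (2 * k) * bernoulli (2 * n - 2 * k)
                             * ('C(2 * n + 2, 2 * k + 2))%:R
    + (2 * n)%:R * bernoulli (2 * n).
Proof.
have := bernoulli_convolution hn.
rewrite !big_nat_even => [|j lt_j odd_j|j lt_j odd_j]; last 2 first.
- by rewrite bernoulli_mul_odd ?mulr0.
- exact: bernoulli_mul_odd.
rewrite !(big_ltn (ltn0Sn n)) muln0 subn0 bernoulli0 !mul1r.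
rewrite bin2_double => conv.
under [X in _^-1 * X]eq_bigr => k _ do rewrite mulrC !addn2.
set B := bernoulli (2 * n) in conv *.
set S := \sum_(1 <= k < n.+1) _ in conv *.
set T := \sum_(1 <= k < n.+1) _ in conv *.
have nz : 1 + n%:R != 0 :> rat by rewrite -mulrS pnatr_eq0.
have -> : S = n.+1%:R^-1 * (n.+1%:R * (B + S)) - B by field.
by rewrite conv !natrM; field.
Qed.
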